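(* Let $V=\bigoplus_{i=1}^n B_i$ be a near vector space over a commutative $F$ with finitely many blocks. Then each block $B_i$ (embedded as $0\oplus\cdots\oplus B_i\oplus\cdots\oplus 0$) and the quasi-kernel $Q(V)=\bigcup_{i=1}^n B_i$ are definable in $V$ by quantifier-free formulas of the language $\mathcal L_{\bar F nvs}=\{+,0,(\lambda)_{\lambda\in\bar F}\}$ (equivalently, by formulas of $\mathcal L_{Fnvs}$ that are quantifier free modulo the quantifier-free definable functions of $\bar F$).
   Context: A near vector space $(V,F)$: $(V,+)$ a group, $F$ a set of endomorphisms containing $0,1,-1$, with $F\setminus\{0\}$ a subgroup of $\mathrm{Aut}(V,+)$ acting fixed point freely ($\alpha x=\beta x\Rightarrow\alpha=\beta$ or $x=0$), such that the quasi-kernel $Q(V)=\{u:\forall\alpha,\beta\in F\,\exists\gamma\in F\ \alpha u+\beta u=\gamma u\}$ generates $V$. Commutative: $\alpha(\beta v)=\beta(\alpha v)$. The blocks of $V$ are the summands in André's decomposition of $V$ into maximal regular near vector subspaces (regular: any two nonzero quasi-kernel elements $u,v$ satisfy $u+\lambda v\in Q(V)$ for some $\lambda\neq0$), each nonzero element of $Q(V)$ lying in exactly one block. $\bar F$ is the set of formal finite sums $\alpha_1+_\cdot\cdots+_\cdot\alpha_n$ of elements of $F$ acting by $v\mapsto\alpha_1(v)+\cdots+\alpha_n(v)$. $\mathcal L_{Fnvs}=\{+,0,(\lambda)_{\lambda\in F}\}$ and $\mathcal L_{\bar Fnvs}=\{+,0,(\lambda)_{\lambda\in\bar F}\}$,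 with unary function symbols interpreted as the actions. *)

From Stdlib Require Import List.
Import ListNotations.
Set Implicit Arguments.

Section NVS.
Variables (V : Type) (add : V -> V -> V) (zero : V) (opp : V -> V).
Variable F : (V -> V) -> Prop.

Definition is_group : Prop :=
  (forall x y z, add x (add y z) = add (add x y) z) /\
  (forall x, add zero x = x) /\ (forall x, add x zero = x) /\
  (forall x, add (opp x) x = zero) /\ (forall x, add x (opp x) = zero).

Definition zero_map : V -> V := fun _ => zero.

Definition quasi_kernel (u : V) : Prop :=
  forall a b, F a -> F b -> exists c, F c /\ add (a u) (b u) = c u.

Inductive gen (S : V -> Prop) : V -> Prop :=
| gen_in : forall x, S x -> gen S x
| gen_zero : gen S zero
| gen_add : forall x y, gen S x -> gen S y -> gen S (add x y)
| gen_opp : forall x, gen S x -> gen S (opp x).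

Definition is_near_vector_space : Prop :=
  is_group /\
  (forall f, F f -> forall x y, f (add x y) = add (f x) (f y)) /\
  F zero_map /\ F (fun x => x) /\ F opp /\
  (forall f, F f -> f <> zero_map ->
     exists g, F g /\ g <> zero_map /\
       (forall x, g (f x) = x) /\ (forall x, f (g x) = x)) /\
  (forall f g, F f -> F g -> f <> zero_map -> g <> zero_map ->
     F (fun x => f (g x))) /\
  (forall a b x, F a -> F b -> a x = b x -> a = b \/ x = zero) /\
  (forall v, gen quasi_kernel v).

Definition F_commutative : Prop :=
  forall a b, F a -> F b -> forall v, a (b v) = b (a v).

(* Near vector subspace: F-invariant subgroup W such that (W, F|W) is a near
   vector space; the remaining axioms are inherited, and Q(W) = Q(V) ∩ W. *)
Definition near_vector_subspace (W : V -> Prop) : Prop :=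
  W zero /\ (forall x y, W x -> W y -> W (add x y)) /\
  (forall x, W x -> W (opp x)) /\
  (forall f x, F f -> W x -> W (f x)) /\
  (forall x, W x -> gen (fun u => W u /\ quasi_kernel u) x).

Definition regular (W : V -> Prop) : Prop :=
  forall u v, W u -> W v -> quasi_kernel u -> quasi_kernel v ->
    u <> zero -> v <> zero ->
    exists l, F l /\ l <> zero_map /\ quasi_kernel (add u (l v)).

Definition is_block (B : V -> Prop) : Prop :=
  near_vector_subspace B /\ regular B /\
  (forall W, near_vector_subspace W -> regular W ->
     (forall x, B x -> W x) -> forall x, W x -> B x).

Definition finitely_many_blocks : Prop :=
  exists Bs : list (V -> Prop),
    forall B, is_block B -> exists B', In B' Bs /\ forall x, B x <-> B' x.

(* The language L_{\bar F nvs} = {+, 0, (λ)_{λ ∈ \bar F}}; an element of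
   \bar F is a formal finite sum α1 +. ... +. αn of elements of F, given as a
   list [α1; ...; αn], acting by v ↦ α1 v + ... + αn v. *)
Inductive term : Type :=
| tvar : nat -> term
| tzero : term
| tadd : term -> term -> term
| tact : list (V -> V) -> term -> term.

Inductive qf_formula : Type :=
| ftrue : qf_formula
| ffalse : qf_formula
| feq : term -> term -> qf_formula
| fnot : qf_formula -> qf_formula
| fand : qf_formula -> qf_formula -> qf_formula
| f_or : qf_formula -> qf_formula -> qf_formula.

Fixpoint term_wf (t : term) : Prop :=
  match t with
  | tvar _ | tzero => True
  | tadd t1 t2 => term_wf t1 /\ term_wf t2
  | tact l t1 => (forall a, In a l -> F a) /\ term_wf t1
  end.

Fixpoint formula_wf (p : qf_formula) : Prop :=
  match p with
  | ftrue | ffalse => True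
  | feq t1 t2 => term_wf t1 /\ term_wf t2
  | fnot p1 => formula_wf p1
  | fand p1 p2 | f_or p1 p2 => formula_wf p1 /\ formula_wf p2
  end.

Definition fbar_act (l : list (V -> V)) (v : V) : V :=
  fold_right (fun a acc => add (a v) acc) zero l.

Fixpoint eval_term (e : nat -> V) (t : term) : V :=
  match t with
  | tvar n => e n
  | tzero => zero
  | tadd t1 t2 => add (eval_term e t1) (eval_term e t2)
  | tact l t1 => fbar_act l (eval_term e t1)
  end.

Fixpoint holds (e : nat -> V) (p : qf_formula) : Prop :=
  match p with
  | ftrue => True
  | ffalse => False
  | feq t1 t2 => eval_term e t1 = eval_term e t2
  | fnot p1 => ~ holds e p1
  | fand p1 p2 => holds e p1 /\ holds e p2
  | f_or p1 p2 => holds e p1 \/ holds e p2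
  end.

Definition env_cons (x : V) (e : nat -> V) : nat -> V :=
  fun n => match n with 0 => x | S k => e k end.

(* S is definable (with parameters from V) by a quantifier-free
   L_{\bar F nvs}-formula φ(x0; x1, x2, ...): x0 is the defined variable,
   the other variables are instantiated by parameters. *)
Definition qf_definable (S : V -> Prop) : Prop :=
  exists (phi : qf_formula) (params : nat -> V),
    formula_wf phi /\ forall x, S x <-> holds (env_cons x params) phi.

End NVS.

From Stdlib Require Import List Classical ClassicalEpsilon.
Import ListNotations.

(* For u in V let [block_of u] be the set of x satisfying every F-relation
   a u + b u = c u (a, b, c in F) that u satisfies.  Commutativity of F makes
   [block_of u] an F-invariant subgroup, and fixed-point-freeness makes it, for
   u a nonzero element of Q(V), exactly the block containing u. *)

Section ParameterFreeDefinability.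
Context {V : Type} {add : V -> V -> V} {zero : V} {F : (V -> V) -> Prop}.

(* Unlike [qf_definable], this
   notion is closed under boolean combinations without renaming parameters. *)
Definition pf_definable (S : V -> Prop) : Prop :=
  exists phi, formula_wf F phi /\ forall e x, S x <-> holds add zero (env_cons x e) phi.

Lemma pf_definable_qf S : pf_definable S -> qf_definable add zero F S.
Proof.
  intros [phi [Hwf Hphi]]. exists phi, (fun _ => zero). split; [exact Hwf|].
  intro x. apply Hphi.
Qed.

Lemma pf_definable_ext (S T : V -> Prop) :
  (forall x, S x <-> T x) -> pf_definable S -> pf_definable T.
Proof.
  intros HST [phi [Hwf Hphi]]. exists phi. split; [exact Hwf|].
  intros e x. rewrite <- HST. apply Hphi.
Qed.

Lemma pf_definable_true : pf_definable (fun _ => True).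
Proof. exists (ftrue V). split; [exact I|]. intros e x. simpl. tauto. Qed.

Lemma pf_definable_false : pf_definable (fun _ => False).
Proof. exists (ffalse V). split; [exact I|]. intros e x. simpl. tauto. Qed.

Lemma pf_definable_zero : pf_definable (fun x => x = zero).
Proof. exists (feq (tvar V 0) (tzero V)). split; [split; exact I|]. intros e x. reflexivity. Qed.

Lemma pf_definable_and S T :
  pf_definable S -> pf_definable T -> pf_definable (fun x => S x /\ T x).
Proof.
  intros [phi [Hwf Hphi]] [psi [Hwf' Hpsi]]. exists (fand phi psi).
  split; [split; assumption|]. intros e x. simpl. rewrite <- Hphi, <- Hpsi. tauto.
Qed.

Lemma pf_definable_or S T :
  pf_definable S -> pf_definable T -> pf_definable (fun x => S x \/ T x).
Proof.
  intros [phi [Hwf Hphi]] [psi [Hwf' Hpsi]]. exists (f_or phi psi).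
  split; [split; assumption|]. intros e x. simpl. rewrite <- Hphi, <- Hpsi. tauto.
Qed.

Lemma pf_definable_union {I : Type} (L : list I) (P : I -> V -> Prop) :
  (forall i, In i L -> pf_definable (P i)) ->
  pf_definable (fun x => exists i, In i L /\ P i x).
Proof.
  induction L as [|i L IH]; intros HL.
  - apply (pf_definable_ext (fun _ => False)); [|exact pf_definable_false].
    intro x. split; [intros []|intros [? [[] _]]].
  - apply (pf_definable_ext (fun x => P i x \/ exists j, In j L /\ P j x)).
    + intro x. split.
      * intros [Hx|[j [Hj Hx]]]; [exists i|exists j]; split; auto; [left|right]; auto.
      * intros [j [[<-|Hj] Hx]]; [left|right; exists j]; auto.
    + apply pf_definable_or; [apply HL; left; reflexivity|].
      apply IH. intros j Hj. apply HL. right; exact Hj.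
Qed.

End ParameterFreeDefinability.

Section NearVectorSpace.
Context {V : Type} {add : V -> V -> V} {zero : V} {opp : V -> V}.
Context {F : (V -> V) -> Prop}.
Hypothesis HV : is_near_vector_space add zero opp F.
Hypothesis Hcomm : F_commutative F.

Local Notation Qk := (quasi_kernel add F).
Local Notation definable := (@pf_definable V add zero F).

Lemma group_laws : is_group add zero opp.
Proof. apply HV. Qed.
Lemma F_additive {f} : F f -> forall x y, f (add x y) = add (f x) (f y).
Proof. destruct HV as [_ [H _]]. apply H. Qed.
Lemma F_zero : F (zero_map zero).
Proof. destruct HV as [_ [_ [H _]]]. exact H. Qed.
Lemma F_id : F (fun x => x).
Proof. destruct HV as [_ [_ [_ [H _]]]]. exact H. Qed.
Lemma F_opp : F opp.
Proof. destruct HV as [_ [_ [_ [_ [H _]]]]]. exact H. Qed.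
Lemma F_fixed_point_free {a b x} : F a -> F b -> a x = b x -> a = b \/ x = zero.
Proof. destruct HV as [_ [_ [_ [_ [_ [_ [_ [H _]]]]]]]]. apply H. Qed.
Lemma qk_generates v : gen add zero opp Qk v.
Proof. destruct HV as [_ [_ [_ [_ [_ [_ [_ [_ H]]]]]]]]. apply H. Qed.

(* Group identities; [addC] uses that inversion, being in F, is additive. *)
Lemma addA x y z : add x (add y z) = add (add x y) z.
Proof. apply group_laws. Qed.
Lemma add0l x : add zero x = x.
Proof. apply group_laws. Qed.
Lemma add0r x : add x zero = x.
Proof. apply group_laws. Qed.
Lemma addNl x : add (opp x) x = zero.
Proof. apply group_laws. Qed.
Lemma addNr x : add x (opp x) = zero.
Proof. apply group_laws. Qed.

Lemma add_cancel_l a x y : add a x = add a y -> x = y.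
Proof.
  intro H. rewrite <- (add0l x), <- (add0l y), <- (addNl a), <- !addA, H.
  reflexivity.
Qed.
Lemma opp_unique a b : add a b = zero -> b = opp a.
Proof. intro H. apply (add_cancel_l a). rewrite H, addNr. reflexivity. Qed.
Lemma oppK x : opp (opp x) = x.
Proof. symmetry. apply opp_unique, addNl. Qed.
Lemma subr0_eq a b : add a (opp b) = zero -> a = b.
Proof. intro H. rewrite <- (add0r a), <- (addNl b), addA, H, add0l. reflexivity. Qed.
Lemma oppD x y : opp (add x y) = add (opp x) (opp y).
Proof. apply F_additive, F_opp. Qed.
Lemma oppD_rev x y : opp (add x y) = add (opp y) (opp x).
Proof.
  symmetry. apply opp_unique.
  rewrite <- addA, (addA y), addNr, add0l, addNr. reflexivity.
Qed.
Lemma addC x y : add x y = add y x.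
Proof.
  rewrite <- (oppK x), <- (oppK y), <- (oppD_rev (opp y) (opp x)), oppD.
  reflexivity.
Qed.
Lemma addACA a b c d : add (add a b) (add c d) = add (add a c) (add b d).
Proof. rewrite <- !addA. f_equal. rewrite !addA. f_equal. apply addC. Qed.

Lemma F_zero_pt {f} : F f -> f zero = zero.
Proof.
  intro Hf. apply (add_cancel_l (f zero)).
  rewrite <- (F_additive Hf), !add0r. reflexivity.
Qed.
Lemma F_opp_pt {f} x : F f -> f (opp x) = opp (f x).
Proof.
  intro Hf. apply opp_unique. rewrite <- (F_additive Hf), addNr.
  apply F_zero_pt, Hf.
Qed.
Lemma opp0 : opp zero = zero.
Proof. apply F_zero_pt, F_opp. Qed.

Definition sum (l : list V) : V := fold_right add zero l.

Lemma sum_map_additive (h : V -> V) l :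
  (forall x y, h (add x y) = add (h x) (h y)) -> h zero = zero ->
  sum (map h l) = h (sum l).
Proof.
  intros Hadd H0. induction l as [|x l IH]; simpl; [auto|].
  rewrite Hadd, IH. reflexivity.
Qed.
Lemma sum_zero l : (forall v, In v l -> v = zero) -> sum l = zero.
Proof.
  induction l as [|x l IH]; simpl; intros H; [reflexivity|].
  rewrite IH, (H x) by auto. apply add0l.
Qed.
Lemma sum_map_add (f1 f2 : V -> V) us :
  sum (map (fun w => add (f1 w) (f2 w)) us) = add (sum (map f1 us)) (sum (map f2 us)).
Proof.
  induction us as [|a r IH]; simpl; [symmetry; apply add0l|].
  rewrite IH, addACA. reflexivity.
Qed.

Definition satisfies (a b c : V -> V) (v : V) : Prop := add (a v) (b v) = c v.

Definition block_of (u x : V) : Prop :=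
  forall a b c, F a -> F b -> F c -> satisfies a b c u -> satisfies a b c x.

Definition nonzero_qk (u : V) : Prop := Qk u /\ u <> zero.

Lemma block_of_zero u : block_of u zero.
Proof.
  intros a b c Ha Hb Hc _. unfold satisfies.
  rewrite (F_zero_pt Ha), (F_zero_pt Hb), (F_zero_pt Hc). apply add0l.
Qed.
Lemma block_of_add u x y : block_of u x -> block_of u y -> block_of u (add x y).
Proof.
  intros Hx Hy a b c Ha Hb Hc Hu. unfold satisfies.
  rewrite (F_additive Ha), (F_additive Hb), (F_additive Hc), addACA.
  rewrite (Hx a b c), (Hy a b c) by assumption. reflexivity.
Qed.
Lemma block_of_opp u x : block_of u x -> block_of u (opp x).
Proof.
  intros Hx a b c Ha Hb Hc Hu. unfold satisfies.
  rewrite (F_opp_pt x Ha), (F_opp_pt x Hb), (F_opp_pt x Hc), <- oppD.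
  rewrite (Hx a b c) by assumption. reflexivity.
Qed.
(* F-invariance is where commutativity of F is needed. *)
Lemma block_of_act u x l : F l -> block_of u x -> block_of u (l x).
Proof.
  intros Hl Hx a b c Ha Hb Hc Hu. unfold satisfies.
  rewrite (Hcomm a l Ha Hl), (Hcomm b l Hb Hl), (Hcomm c l Hc Hl), <- (F_additive Hl).
  f_equal. apply (Hx a b c); assumption.
Qed.
Lemma block_of_refl u : block_of u u.
Proof. intros a b c _ _ _ Hu. exact Hu. Qed.
Lemma block_of_trans {u w x} : block_of u w -> block_of w x -> block_of u x.
Proof. intros Hw Hx a b c Ha Hb Hc Hu. apply Hx, Hw; assumption. Qed.
Lemma block_of_sum u l : (forall v, In v l -> block_of u v) -> block_of u (sum l).
Proof.
  induction l as [|x l IH]; simpl; intros H; [apply block_of_zero|].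
  apply block_of_add; auto.
Qed.

Lemma qk_zero : Qk zero.
Proof.
  intros a b Ha Hb. exists (zero_map zero). split; [apply F_zero|].
  rewrite (F_zero_pt Ha), (F_zero_pt Hb). apply add0l.
Qed.
(* Membership in Q(V) is itself a family of F-relations. *)
Lemma block_of_qk {u x} : Qk u -> block_of u x -> Qk x.
Proof.
  intros Hu Hx a b Ha Hb. destruct (Hu a b Ha Hb) as [c [Hc E]].
  exists c. split; [exact Hc|]. apply (Hx a b c); assumption.
Qed.
(* On Q(V) \ {0}, fixed-point-freeness makes the relation symmetric. *)
Lemma block_of_sym {u w} : nonzero_qk u -> nonzero_qk w -> block_of u w -> block_of w u.
Proof.
  intros [Hu _] [_ Hw] Huw a b c Ha Hb Hc E.
  destruct (Hu a b Ha Hb) as [c' [Hc' E']].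
  pose proof (Huw a b c' Ha Hb Hc' E') as E2. unfold satisfies in E, E2.
  rewrite E in E2.
  destruct (F_fixed_point_free Hc Hc' E2) as [->|]; [exact E'|contradiction].
Qed.

Definition unrelated (u w : V) : Prop := ~ block_of u w.

Lemma separating_relation {u w} : unrelated u w ->
  exists a b c, F a /\ F b /\ F c /\ satisfies a b c u /\ ~ satisfies a b c w.
Proof.
  intro Hn. apply NNPP; intro H; apply Hn; intros a b c Ha Hb Hc Hu.
  apply NNPP; intro Hw; apply H. exists a, b, c; auto.
Qed.

(* The defect of the relation a + b = c, an additive map that vanishes on
   block_of u when u satisfies the relation. *)
Definition defect (a b c : V -> V) (v : V) : V := add (add (a v) (b v)) (opp (c v)).

Section Defect.
Context {a b c : V -> V}.
Hypotheses (Ha : F a) (Hb : F b) (Hc : F c).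

Lemma defect_add x y : defect a b c (add x y) = add (defect a b c x) (defect a b c y).
Proof.
  unfold defect. rewrite (F_additive Ha), (F_additive Hb), (F_additive Hc), oppD.
  rewrite (addACA (add (a x) (b x))), (addACA (a x)). reflexivity.
Qed.
Lemma defect_zero : defect a b c zero = zero.
Proof.
  unfold defect. rewrite (F_zero_pt Ha), (F_zero_pt Hb), (F_zero_pt Hc), add0l.
  apply addNr.
Qed.
Lemma sum_defect l : sum (map (defect a b c) l) = defect a b c (sum l).
Proof. apply sum_map_additive; [exact defect_add|exact defect_zero]. Qed.
Lemma block_of_defect u v : block_of u v -> block_of u (defect a b c v).
Proof.
  intro Hv. unfold defect.
  apply block_of_add; [apply block_of_add|apply block_of_opp]; apply block_of_act; auto.
Qed.
Lemma defect_satisfied {v} : satisfies a b c v -> defect a b c v = zero.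
Proof. intro Hv. unfold defect. rewrite Hv. apply addNr. Qed.
Lemma defect_injective {w v} : nonzero_qk w -> ~ satisfies a b c w ->
  block_of w v -> defect a b c v = zero -> v = zero.
Proof.
  intros [Hw _] Hne Hv E. destruct (Hw a b Ha Hb) as [d [Hd Ed]].
  unfold defect in E. rewrite (Hv a b d Ha Hb Hd Ed) in E.
  apply subr0_eq in E.
  destruct (F_fixed_point_free Hd Hc E) as [->|]; [contradiction|assumption].
Qed.
End Defect.

Lemma blocks_independent (l : list (V * V)) :
  ForallOrdPairs unrelated (map fst l) ->
  (forall p, In p l -> nonzero_qk (fst p) /\ block_of (fst p) (snd p)) ->
  sum (map snd l) = zero -> forall p, In p l -> snd p = zero.
Proof.
  intro Hun. remember (map fst l) as us eqn:Hus. revert l Hus.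
  induction Hun as [|u us Hhead Hun IH]; intros l Hus Hl Hsum p Hp.
  - destruct l; [destruct Hp|discriminate].
  - destruct l as [|[u' v] rest]; [discriminate|]. injection Hus as <- Hrest.
    assert (Hrest0 : forall p, In p rest -> snd p = zero).
    { intros [w y] Hwy. simpl.
      assert (Huw : unrelated u w).
      { rewrite Forall_forall in Hhead. apply Hhead. rewrite Hrest.
        exact (in_map fst _ _ Hwy). }
      destruct (separating_relation Huw) as (a & b & c & Ha & Hb & Hc & Hu & Hw).
      destruct (Hl _ (or_intror Hwy)) as [Qw Kwy].
      apply (defect_injective Ha Hb Hc Qw Hw Kwy).
      (* apply the defect: it kills the u-component and keeps the others *)
      refine (IH (map (fun p => (fst p, defect a b c (snd p))) rest) _ _ _
                (w, defect a b c y) _).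
      - rewrite map_map. exact Hrest.
      - intros q Hq. apply in_map_iff in Hq as [q' [<- Hq']]. simpl.
        destruct (Hl q' (or_intror Hq')) as [Hq1 Hq2].
        split; [exact Hq1|apply block_of_defect; assumption].
      - rewrite map_map. simpl. rewrite <- (map_map snd (defect a b c)), sum_defect
          by assumption.
        simpl in Hsum. rewrite <- (defect_zero Ha Hb Hc), <- Hsum, defect_add by assumption.
        destruct (Hl _ (or_introl eq_refl)) as [_ Kuv]. simpl in Kuv.
        rewrite (defect_satisfied (Kuv a b c Ha Hb Hc Hu)), add0l.
        reflexivity.
      - exact (in_map (fun p => (fst p, defect a b c (snd p))) _ _ Hwy). }
    destruct Hp as [<-|Hp]; [|exact (Hrest0 _ Hp)].
    simpl in Hsum |- *. rewrite sum_zero, add0r in Hsum; [exact Hsum|].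
    intros v' Hv'. apply in_map_iff in Hv' as [q [<- Hq]]. exact (Hrest0 _ Hq).
Qed.

(* Otherwise, writing w = p + l q, the relation p + l q - w = 0 would
   contradict independence of the blocks of p, q and w. *)
Lemma regular_pair_related p q l :
  nonzero_qk p -> nonzero_qk q -> F l -> l <> zero_map zero ->
  Qk (add p (l q)) -> block_of q p.
Proof.
  intros Hp Hq Hl Hl0 Qw. apply NNPP; intro Hqp.
  set (w := add p (l q)) in *.
  assert (Hlq : l q <> zero).
  { intro E. destruct (F_fixed_point_free Hl F_zero E) as [|]; [contradiction|].
    apply (proj2 Hq); assumption. }
  assert (Kqlq : block_of q (l q)) by (apply block_of_act; [exact Hl|apply block_of_refl]).
  assert (Hpw : p = add w (opp (l q))) by (unfold w; rewrite <- addA, addNr, add0r; reflexivity).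
  destruct (classic (block_of q w)) as [Kqw|Hqw].
  { apply Hqp. rewrite Hpw. apply block_of_add; [exact Kqw|apply block_of_opp, Kqlq]. }
  assert (Nw : nonzero_qk w).
  { split; [exact Qw|]. intro E. apply Hqw. rewrite E. apply block_of_zero. }
  assert (Hpq : unrelated p q) by (intro H; apply Hqp, block_of_sym; auto).
  destruct (classic (block_of p w)) as [Kpw|Hpw'].
  - (* (p - w) + l q = 0 with p - w in block_of p *)
    apply Hlq.
    refine (blocks_independent [(p, add p (opp w)); (q, l q)] _ _ _ (q, l q) _).
    + repeat constructor; assumption.
    + intros r [<-|[<-|[]]]; simpl; split; try assumption.
      apply block_of_add; [apply block_of_refl|apply block_of_opp, Kpw].
    + simpl. unfold w. rewrite add0r, oppD, addA, addNr, add0l, addNl. reflexivity.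
    + right; left; reflexivity.
  - (* p + l q - w = 0 with p, q, w pairwise unrelated *)
    apply (proj2 Hp).
    refine (blocks_independent [(p, p); (q, l q); (w, opp w)] _ _ _ (p, p) _).
    + repeat constructor; assumption.
    + intros r [<-|[<-|[<-|[]]]]; simpl; split; try assumption.
      * apply block_of_refl.
      * apply block_of_opp, block_of_refl.
    + simpl. rewrite add0r, addA. apply addNr.
    + left; reflexivity.
Qed.

(* A regular near vector subspace containing q in Q(V)\{0} lies in block_of q:
   its generators from Q(V) are related to q by [regular_pair_related]. *)
Lemma regular_sub_block_of {W q} :
  near_vector_subspace add zero opp F W -> regular add zero F W ->
  W q -> nonzero_qk q -> forall x, W x -> block_of q x.
Proof.
  intros [_ [_ [_ [_ Hgen]]]] Hreg Wq Hq x Wx.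
  pose proof (Hgen x Wx) as Gx; clear Wx.
  induction Gx as [p [Wp Qp]| | x y _ IHx _ IHy | x _ IHx].
  - destruct (classic (p = zero)) as [->|Hp0]; [apply block_of_zero|].
    destruct (Hreg p q Wp Wq Qp (proj1 Hq) Hp0 (proj2 Hq)) as [l [Hl [Hl0 Hpl]]].
    apply (regular_pair_related p q l); auto. split; assumption.
  - apply block_of_zero.
  - apply block_of_add; assumption.
  - apply block_of_opp; assumption.
Qed.

Lemma block_of_nvs {u} : nonzero_qk u -> near_vector_subspace add zero opp F (block_of u).
Proof.
  intros Hu. repeat split.
  - apply block_of_zero.
  - intros x y; apply block_of_add.
  - intros x; apply block_of_opp.
  - intros f x Hf; apply block_of_act, Hf.
  - intros x Hx. apply gen_in. split; [exact Hx|]. exact (block_of_qk (proj1 Hu) Hx).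
Qed.

Lemma block_of_regular {u} : nonzero_qk u -> regular add zero F (block_of u).
Proof.
  intros Hu v w Hv Hw _ _ Hv0 _. exists (fun x => x). repeat split.
  - exact F_id.
  - intro E. apply Hv0. exact (f_equal (fun h => h v) E).
  - apply (block_of_qk (proj1 Hu)), block_of_add; assumption.
Qed.

Lemma block_of_is_block {u} : nonzero_qk u -> is_block add zero opp F (block_of u).
Proof.
  intros Hu. split; [exact (block_of_nvs Hu)|]. split; [exact (block_of_regular Hu)|].
  intros W HW HWreg Hsub. apply (regular_sub_block_of HW HWreg (Hsub u (block_of_refl u)) Hu).
Qed.

Lemma block_eq_block_of {B q} : is_block add zero opp F B -> B q -> nonzero_qk q ->
  forall x, B x <-> block_of q x.
Proof.
  intros [HB [Hreg Hmax]] Bq Hq x. split.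
  - apply (regular_sub_block_of HB Hreg Bq Hq).
  - apply (Hmax _ (block_of_nvs Hq) (block_of_regular Hq)).
    apply (regular_sub_block_of HB Hreg Bq Hq).
Qed.

Lemma nvs_trivial {W} : near_vector_subspace add zero opp F W ->
  ~ (exists q, W q /\ nonzero_qk q) -> forall x, W x <-> x = zero.
Proof.
  intros [W0 [_ [_ [_ Hgen]]]] Hn x. split; [|intros ->; exact W0].
  intro Wx. pose proof (Hgen x Wx) as Gx; clear Wx.
  induction Gx as [p [Wp Qp]| | x y _ IHx _ IHy | x _ IHx].
  - apply NNPP; intro Hp0. apply Hn. exists p. repeat split; assumption.
  - reflexivity.
  - rewrite IHx, IHy. apply add0l.
  - rewrite IHx. apply opp0.
Qed.

Definition representatives (us : list V) : Prop :=
  ForallOrdPairs unrelated us /\ (forall u, In u us -> nonzero_qk u) /\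
  (forall q, nonzero_qk q -> exists u, In u us /\ block_of u q).

Lemma finite_qk_cover : finitely_many_blocks add zero opp F ->
  exists L, (forall u, In u L -> nonzero_qk u) /\
    forall q, nonzero_qk q -> exists u, In u L /\ block_of u q.
Proof.
  intros [Bs HBs].
  assert (Hpick : forall Bs', exists L, (forall u, In u L -> nonzero_qk u) /\
    forall B, In B Bs' -> forall q, nonzero_qk q -> B q -> exists u, In u L /\ B u).
  { induction Bs' as [|B Bs' [L [HL HcovL]]].
    - exists []. split; intros ? [].
    - destruct (classic (exists q, nonzero_qk q /\ B q)) as [[q [Hq Bq]]|Hn].
      + exists (q :: L). split; [intros u [<-|Hu]; auto|].
        intros B' [<-|HB'] q' Hq' Bq'; [exists q; split; [left|]; auto|].
        destruct (HcovL B' HB' q' Hq' Bq') as [u [Hu Bu]]. exists u; split; [right|]; auto.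
      + exists L. split; [exact HL|]. intros B' [<-|HB'] q' Hq' Bq'.
        * exfalso. apply Hn. exists q'. split; assumption.
        * exact (HcovL B' HB' q' Hq' Bq'). }
  destruct (Hpick Bs) as [L [HL HcovL]]. exists L. split; [exact HL|].
  intros q Hq. destruct (HBs _ (block_of_is_block Hq)) as [B [HB HBq]].
  destruct (HcovL B HB q Hq (proj1 (HBq q) (block_of_refl q))) as [u [Hu Bu]].
  exists u. split; [exact Hu|]. apply block_of_sym; auto. apply HBq, Bu.
Qed.

Lemma thin_cover {L} : (forall u, In u L -> nonzero_qk u) ->
  exists us, ForallOrdPairs unrelated us /\ (forall u, In u us -> nonzero_qk u) /\
    forall q, (exists u, In u L /\ block_of u q) -> exists u, In u us /\ block_of u q.
Proof.
  induction L as [|v L IH]; intros HL.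
  { exists []. split; [constructor|split; [intros ? []|intros q [? [[] _]]]]. }
  destruct IH as [us [Hun [Hus Hcov]]]; [intros; apply HL; right; assumption|].
  destruct (classic (exists u, In u us /\ block_of u v)) as [[u [Hu Kuv]]|Hn].
  - exists us. split; [exact Hun|split; [exact Hus|]]. intros q [u' [[<-|Hu'] Kq]].
    + exists u. split; [exact Hu|]. exact (block_of_trans Kuv Kq).
    + apply Hcov. exists u'. split; assumption.
  - exists (v :: us). split; [|split].
    + constructor; [|exact Hun]. rewrite Forall_forall. intros w Hw Kvw.
      apply Hn. exists w. split; [exact Hw|]. apply block_of_sym; auto. apply HL; left; reflexivity.
    + intros u [<-|Hu]; [apply HL; left|apply Hus]; auto.
    + intros q [u' [[<-|Hu'] Kq]]; [exists v; split; [left|]; auto|].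
      destruct (Hcov q (ex_intro _ u' (conj Hu' Kq))) as [u [Hu Kuq]].
      exists u. split; [right|]; assumption.
Qed.

Lemma representatives_exist : finitely_many_blocks add zero opp F ->
  exists us, representatives us.
Proof.
  intro Hfin. destruct (finite_qk_cover Hfin) as [L [HL HcovL]].
  destruct (thin_cover HL) as [us [Hun [Hus Hcov]]].
  exists us. split; [exact Hun|split; [exact Hus|]].
  intros q Hq. apply Hcov, HcovL, Hq.
Qed.

Lemma unrelated_nodup us : ForallOrdPairs unrelated us -> NoDup us.
Proof.
  induction 1 as [|u us Hhead _ IH]; constructor; [|exact IH].
  intro Hu. rewrite Forall_forall in Hhead. exact (Hhead u Hu (block_of_refl u)).
Qed.

Lemma representatives_unrelated {us u w} : representatives us ->
  In u us -> In w us -> u <> w -> unrelated u w.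
Proof.
  intros [Hun [Hus _]] Hu Hw Huw Kuw.
  destruct (ForallOrdPairs_In Hun u w Hu Hw) as [|[Hn|Hn]]; [contradiction|exact (Hn Kuw)|].
  apply Hn, block_of_sym; auto.
Qed.

Definition single (w0 q w : V) : V :=
  if excluded_middle_informative (w = w0) then q else zero.

Lemma sum_single us w0 q : NoDup us -> In w0 us -> sum (map (single w0 q) us) = q.
Proof.
  induction us as [|w us IH]; simpl; intros Hnd Hin; [contradiction|].
  apply NoDup_cons_iff in Hnd as [Hw Hnd]. unfold single at 1.
  destruct (excluded_middle_informative (w = w0)) as [->|Hne].
  - rewrite sum_zero, add0r; [reflexivity|]. intros v Hv.
    apply in_map_iff in Hv as [w [<- Hw']]. unfold single.
    destruct (excluded_middle_informative (w = w0)) as [->|]; [contradiction|reflexivity].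
  - destruct Hin as [->|Hin]; [contradiction|]. rewrite IH, add0l; auto.
Qed.

Lemma decomposition {us} : representatives us -> forall x,
  exists f, (forall w, In w us -> block_of w (f w)) /\ x = sum (map f us).
Proof.
  intros Hrep x. pose proof Hrep as [Hun [_ Hcov]].
  induction (qk_generates x) as [q Qq| | x y _ [f [Hf ->]] _ [g [Hg ->]] | x _ [f [Hf ->]]].
  - destruct (classic (q = zero)) as [->|Hq0].
    + exists (fun _ => zero). split; [intros; apply block_of_zero|].
      symmetry. apply sum_zero. intros v Hv. apply in_map_iff in Hv as [? [<- _]]. reflexivity.
    + destruct (Hcov q (conj Qq Hq0)) as [u [Hu Kuq]]. exists (single u q). split.
      * intros w Hw. unfold single.
        destruct (excluded_middle_informative (w = u)) as [->|]; [exact Kuq|apply block_of_zero].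
      * symmetry. apply sum_single; [apply unrelated_nodup, Hun|exact Hu].
  - exists (fun _ => zero). split; [intros; apply block_of_zero|].
    symmetry. apply sum_zero. intros v Hv. apply in_map_iff in Hv as [? [<- _]]. reflexivity.
  - exists (fun w => add (f w) (g w)). split; [intros; apply block_of_add; auto|].
    symmetry. apply sum_map_add.
  - exists (fun w => opp (f w)). split; [intros; apply block_of_opp; auto|].
    rewrite <- (map_map f opp), (sum_map_additive opp (map f us)); [reflexivity|apply oppD|apply opp0].
Qed.

Lemma components_unique {us} f : representatives us ->
  (forall w, In w us -> block_of w (f w)) -> sum (map f us) = zero ->
  forall w, In w us -> f w = zero.
Proof.
  intros [Hun [Hus _]] Hf Hsum w Hw.
  apply (blocks_independent (map (fun u => (u, f u)) us)) with (p := (w, f w)).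
  - rewrite map_map, map_id. exact Hun.
  - intros p Hp. apply in_map_iff in Hp as [u [<- Hu]]. simpl. auto.
  - rewrite map_map. exact Hsum.
  - exact (in_map (fun u => (u, f u)) _ _ Hw).
Qed.

Lemma component_vanishes {us f x w a b c} : representatives us ->
  (forall u, In u us -> block_of u (f u)) -> x = sum (map f us) -> In w us ->
  F a -> F b -> F c -> ~ satisfies a b c w -> satisfies a b c x -> f w = zero.
Proof.
  intros Hrep Hf Hx Hw Ha Hb Hc Hnw Hsx. pose proof Hrep as [_ [Hus _]].
  apply (defect_injective Ha Hb Hc (Hus w Hw) Hnw (Hf w Hw)).
  apply (components_unique (fun u => defect a b c (f u)) Hrep); [| |exact Hw].
  - intros u Hu. apply block_of_defect; auto.
  - rewrite <- (map_map f (defect a b c)), sum_defect, <- Hx by assumption.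
    exact (defect_satisfied Hsx).
Qed.

Lemma relation_definable a b c : F a -> F b -> F c -> definable (satisfies a b c).
Proof.
  intros Ha Hb Hc. exists (feq (tact [a; b] (tvar V 0)) (tact [c] (tvar V 0))). split.
  - simpl. split; split; try exact I; intros d Hd; simpl in Hd; intuition congruence.
  - intros e x. simpl. unfold fbar_act, satisfies. simpl. rewrite !add0r. reflexivity.
Qed.

(* For each w in L unrelated to u, keep one relation of u violated by w: the
   conjunction of these relations is a definable superset of block_of u. *)
Lemma separating_relations u L : exists S, definable S /\
  (forall x, block_of u x -> S x) /\
  (forall x, S x -> forall w, In w L -> unrelated u w ->
     exists a b c, F a /\ F b /\ F c /\ ~ satisfies a b c w /\ satisfies a b c x).
Proof.
  induction L as [|w L [S [HS [HuS HSsep]]]].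
  { exists (fun _ => True). split; [exact pf_definable_true|].
    split; [intros; exact I|intros x _ w []]. }
  destruct (classic (block_of u w)) as [Kuw|Huw].
  - exists S. split; [exact HS|]. split; [exact HuS|].
    intros x Sx w' [<-|Hw']; [intros Hn; contradiction|exact (HSsep x Sx w' Hw')].
  - destruct (separating_relation Huw) as (a & b & c & Ha & Hb & Hc & Hu & Hw).
    exists (fun x => satisfies a b c x /\ S x). split.
    { apply pf_definable_and; [apply relation_definable|]; assumption. }
    split; [intros x Kx; split; [apply (Kx a b c)|apply HuS]; assumption|].
    intros x [Hx Sx] w' [<-|Hw'] Hn; [exists a, b, c; auto|exact (HSsep x Sx w' Hw' Hn)].
Qed.

(* Each representative block is definable: an element satisfying the
   separating relations has no component outside the block of u. *)
Lemma block_of_definable {us u} : representatives us -> In u us -> definable (block_of u).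
Proof.
  intros Hrep Hu. destruct (separating_relations u us) as [S [HS [HuS HSsep]]].
  apply (pf_definable_ext S); [|exact HS]. intro x. split; [|exact (HuS x)].
  intro Sx. destruct (decomposition Hrep x) as [f [Hf Hx]].
  assert (Hother : forall w, In w us -> w <> u -> f w = zero).
  { intros w Hw Hwu.
    destruct (HSsep x Sx w Hw (representatives_unrelated Hrep Hu Hw (not_eq_sym Hwu)))
      as (a & b & c & Ha & Hb & Hc & Hnw & Hsx).
    exact (component_vanishes Hrep Hf Hx Hw Ha Hb Hc Hnw Hsx). }
  rewrite Hx. apply block_of_sum. intros v Hv. apply in_map_iff in Hv as [w [<- Hw]].
  destruct (classic (w = u)) as [->|Hwu]; [exact (Hf u Hu)|].
  rewrite (Hother w Hw Hwu). apply block_of_zero.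
Qed.

(* Every block is {0} or the block of a representative, hence definable. *)
Lemma block_definable {us B} : representatives us ->
  is_block add zero opp F B -> definable B.
Proof.
  intros Hrep HB. pose proof Hrep as [_ [Hus Hcov]].
  destruct (classic (exists q, B q /\ nonzero_qk q)) as [[q [Bq Hq]]|Hn].
  - destruct (Hcov q Hq) as [u [Hu Kuq]].
    apply (pf_definable_ext (block_of u)); [|exact (block_of_definable Hrep Hu)].
    intro x. rewrite (block_eq_block_of HB Bq Hq x). split.
    + intro Kux. exact (block_of_trans (block_of_sym (Hus u Hu) Hq Kuq) Kux).
    + intro Kqx. exact (block_of_trans Kuq Kqx).
  - apply (pf_definable_ext (fun x => x = zero)); [|exact pf_definable_zero].
    intro x. symmetry. exact (nvs_trivial (proj1 HB) Hn x).
Qed.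

(* Q(V) is {0} together with the finitely many representative blocks. *)
Lemma qk_definable {us} : representatives us -> definable Qk.
Proof.
  intros Hrep. pose proof Hrep as [_ [Hus Hcov]].
  apply (pf_definable_ext (fun x => x = zero \/ exists u, In u us /\ block_of u x)).
  - intro x. split.
    + intros [->|[u [Hu Kux]]]; [exact qk_zero|exact (block_of_qk (proj1 (Hus u Hu)) Kux)].
    + intro Qx. destruct (classic (x = zero)) as [|Hx0]; [left; assumption|right].
      exact (Hcov x (conj Qx Hx0)).
  - apply pf_definable_or; [exact pf_definable_zero|].
    apply pf_definable_union. intros u Hu. exact (block_of_definable Hrep Hu).
Qed.

End NearVectorSpace.

Theorem mainTheorem14 (V : Type) (add : V -> V -> V) (zero : V) (opp : V -> V)
  (F : (V -> V) -> Prop)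
  (HV : is_near_vector_space add zero opp F)
  (Hcomm : F_commutative F)
  (Hfin : finitely_many_blocks add zero opp F) :
  (forall B, is_block add zero opp F B -> qf_definable add zero F B) /\
  qf_definable add zero F (quasi_kernel add F).
Proof.
  destruct (representatives_exist HV Hcomm Hfin) as [us Hrep].
  split.
  - intros B HB. apply pf_definable_qf. exact (block_definable HV Hcomm Hrep HB).
  - apply pf_definable_qf. exact (qk_definable HV Hcomm Hrep).
Qed.
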